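(* Let $q$ be a prime power, and let $m$ and $j$ be positive integers with $m>1$, $1\le j\le q^m-1$ and $\gcd(j,q^m-1)=1$. Let $\mu_j(x)=\sum_{i=0}^{m-1}x^{jq^i}=\mathrm{Tr}_{\mathbf{F}_{q^m}/\mathbf{F}_q}(x^j)$ and let $h(x)\in\mathbf{F}_q[x]$. Then $x\,h(\mu_j(x))$ is a permutation polynomial of $\mathbf{F}_{q^m}$ if and only if $h(0)\ne0$ and $x\,h(x)^j$ permutes $\mathbf{F}_q$.
   Context: $\mathrm{Tr}_{\mathbf{F}_{q^m}/\mathbf{F}_q}(x)=x+x^q+\cdots+x^{q^{m-1}}$. A permutation polynomial of a finite field $K$ is a polynomial inducing a bijection $K\to K$. *)

From HB Require Import structures.
From mathcomp Require Import all_boot all_order all_algebra.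
Set Implicit Arguments. Unset Strict Implicit. Unset Printing Implicit Defensive.
Import GRing.Theory.
Local Open Scope ring_scope.

(* The subfield F_q of a finite field L of order q^m: the fixed points of x |-> x^q. *)
Definition subFq (L : finFieldType) (q : nat) : {pred L} := [pred x | x ^+ q == x].

Definition trace_qm (L : finFieldType) (q m : nat) (y : L) : L :=
  \sum_(i < m) y ^+ (q ^ i).

Definition mu_j (L : finFieldType) (q m j : nat) (x : L) : L :=
  \sum_(i < m) x ^+ (j * q ^ i).

(* f permutes the subset A: maps A into A and is injective on A
   (equivalently, for finite A, induces a bijection A -> A). *)
Definition permutes_on (L : finFieldType) (A : {pred L}) (f : L -> L) : Prop :=
  {in A, forall x, f x \in A} /\ {in A &, injective f}.

(* The key identity is the semiconjugacy mu_j (x h(mu_j x)) = g (mu_j x) with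
   g(y) = y h(y)^j on F_q: it holds because mu_j x = Tr(x^j) and the trace is
   F_q-linear.  As x |-> x^j is a bijection of F_{q^m} and the trace maps
   F_{q^m} onto F_q, mu_j is onto F_q, so a permutation f of F_{q^m} forces g
   to be onto, hence a permutation, of F_q.  Since m > 1 the trace has a
   nonzero kernel element x, and f(x^(1/j)) = x^(1/j) h(0) = f(0) forces
   h(0) != 0.  Conversely f(a) = f(b) gives g(mu_j a) = g(mu_j b), so
   mu_j a = mu_j b, and h(mu_j a) != 0 (else g(mu_j a) = 0 = g(0), so mu_j a = 0
   and h(0) = 0) lets us cancel. *)
From HB Require Import structures.
From mathcomp Require Import all_boot all_order all_algebra all_field.
Set Implicit Arguments.
Unset Strict Implicit.
Unset Printing Implicit Defensive.

Import GRing.Theory.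
Local Open Scope ring_scope.

Lemma exprn_coprime_inv (F : finFieldType) j :
  (0 < j)%N -> coprime j #|F|.-1 -> exists r, forall x : F, (x ^+ r) ^+ j = x.
Proof.
move=> j_gt0 /(coprimeP _ j_gt0)[[u v] /= bezout]; exists u => x.
have cardF : #|F| = #|F|.-1.+1 by rewrite prednK //; apply/card_gt0P; exists 0.
have x_period k : x ^+ (k * #|F|.-1).+1 = x.
  elim: k => [|k IH]; first by rewrite expr1.
  by rewrite mulSn -addSn exprD -cardF expf_card -exprS IH.
have uj : (u * j = (v * #|F|.-1).+1)%N.
  by rewrite -addn1 -bezout subnKC // ltnW // -subn_gt0 bezout.
by rewrite -exprM uj x_period.
Qed.

Lemma mu_jE (L : finFieldType) q m j (x : L) :
  mu_j q m j x = trace_qm q m (x ^+ j).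
Proof. by apply: eq_bigr => i _; rewrite exprM. Qed.

Lemma permutes_on_predT (L : finFieldType) (f : L -> L) :
  permutes_on [pred _ | true] f <-> injective f.
Proof.
split=> [[_ f_inj] x y | f_inj]; first exact: f_inj.
by split=> // x y _ _; apply: f_inj.
Qed.

Lemma semiconj_permutes_on (L : finFieldType) (A : {pred L}) (f g mu : L -> L) :
  injective f -> (forall x, mu x \in A) -> {in A, forall a, exists x, mu x = a} ->
  (forall x, mu (f x) = g (mu x)) -> permutes_on A g.
Proof.
move=> f_inj muA mu_onto mu_f.
have gA : {in A, forall a, g a \in A}.
  by move=> a /mu_onto[x <-]; rewrite -mu_f muA.
split=> //; apply/imset_injP; rewrite eqn_leq leq_imset_card /=.
apply/subset_leq_card/subsetP => a /mu_onto[x <-].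
have [f_inv _ f_invK] := injF_bij f_inj.
by rewrite -(f_invK x) mu_f imset_f ?muA.
Qed.

Section Frobenius.
Variables (L : finFieldType) (q : nat).
Hypothesis q_pchar : [pchar L].-nat q.

Local Notation Fq := (@subFq L q).

Lemma frobeniusD (x y : L) : (x + y) ^+ q = x ^+ q + y ^+ q.
Proof. exact: exprDn_pchar. Qed.

Lemma frobenius_iterD i (x y : L) :
  (x + y) ^+ (q ^ i) = x ^+ (q ^ i) + y ^+ (q ^ i).
Proof. by elim: i => [|i IH]; rewrite ?expr1 // expnSr !exprM IH frobeniusD. Qed.

Fact subFq_divring_closed : divring_closed Fq.
Proof.
split=> [|x y|x y]; rewrite !inE ?expr1n //.
  move=> /eqP xq /eqP yq; have := frobeniusD (x - y) y.
  by rewrite subrK xq yq => /esym/(canRL (addrK y)) ->.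
by rewrite exprMn exprVn => /eqP -> /eqP ->.
Qed.

HB.instance Definition _ :=
  GRing.isDivringClosed.Build L Fq subFq_divring_closed.

Lemma subFq_expq i (x : L) : x \in Fq -> x ^+ (q ^ i) = x.
Proof.
rewrite inE => /eqP xq; elim: i => [|i IH]; first by rewrite expr1.
by rewrite expnSr exprM IH.
Qed.

Lemma trace_qmB m (x y : L) :
  trace_qm q m (x - y) = trace_qm q m x - trace_qm q m y.
Proof.
rewrite /trace_qm -sumrB; apply: eq_bigr => i _.
by rewrite -[in RHS](subrK y x) [in RHS]frobenius_iterD addrK.
Qed.

Lemma trace_qmZ m (d y : L) :
  d \in Fq -> trace_qm q m (d * y) = d * trace_qm q m y.
Proof.
move=> Fd; rewrite /trace_qm mulr_sumr; apply: eq_bigr => i _.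
by rewrite exprMn (subFq_expq _ Fd).
Qed.

Hypothesis q_gt1 : (1 < q)%N.

Lemma card_subFq : (#|Fq| <= q)%N.
Proof.
have size_XqX : size ('X^q - 'X : {poly L}) = q.+1.
  by rewrite size_polyDl size_polyXn // size_polyN size_polyX ltnS.
have XqX_neq0 : ('X^q - 'X : {poly L}) != 0 by rewrite -size_poly_eq0 size_XqX.
rewrite cardE -ltnS -size_XqX; apply: (max_poly_roots XqX_neq0 _ (enum_uniq _)).
apply/allP => x; rewrite mem_enum inE => /eqP xq.
by rewrite /root !hornerE xq subrr.
Qed.

Variable m : nat.
Hypothesis cardL : #|L| = (q ^ m)%N.
Hypothesis m_gt0 : (0 < m)%N.

Lemma trace_qm_subFq (y : L) : trace_qm q m y \in Fq.
Proof.
have yqm : y ^+ (q ^ m) = y by rewrite -cardL expf_card.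
have frobenius0 : 0 ^+ q = 0 :> L by rewrite expr0n gtn_eqF // ltnW.
rewrite inE /trace_qm (big_morph (fun x : L => x ^+ q) frobeniusD frobenius0).
apply/eqP; case: m m_gt0 yqm => // n _ yqm.
rewrite big_ord_recr /= big_ord_recl /= -exprM -expnSr yqm expr1 addrC.
by congr (_ + _); apply: eq_bigr => i _; rewrite -exprM -expnSr.
Qed.

Lemma trace_qm_neq0 : exists y : L, trace_qm q m y != 0.
Proof.
pose T : {poly L} := \sum_(i < m) 'X^(q ^ i).
have lt_pred_m : (m.-1 < m)%N by rewrite prednK.
have T_coef : T`_(q ^ m.-1) = 1.
  rewrite coef_sum (bigD1 (Ordinal lt_pred_m)) //= coefXn eqxx big1 ?addr0 //.
  move=> i ne_i; rewrite coefXn eqn_exp2l //.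
  by move: ne_i; rewrite -val_eqE /= eq_sym => /negbTE ->.
have T_neq0 : T != 0.
  by apply/eqP => T0; move: T_coef; rewrite T0 coef0 => /esym/eqP; rewrite oner_eq0.
have size_T : (size T <= #|L|)%N.
  apply: leq_trans (size_sum _ _ _) _; apply/bigmax_leqP => i _.
  by rewrite size_polyXn cardL ltn_exp2l // -ltnS prednK.
apply/existsP; apply: contraT; rewrite negb_exists => /forallP trace0.
have roots_T : all (root T) (enum L).
  apply/allP => y _; have := trace0 y; rewrite negbK /root horner_sum.
  by under eq_bigr => i _ do rewrite hornerXn.
by have := max_poly_roots T_neq0 roots_T (enum_uniq L); rewrite -cardE ltnNge size_T.
Qed.

Lemma trace_qm_onto (a : L) : a \in Fq -> exists y, trace_qm q m y = a.
Proof.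
have [c Tc_neq0] := trace_qm_neq0; exists (a / trace_qm q m c * c).
by rewrite trace_qmZ ?divfK // rpredM ?rpredV ?trace_qm_subFq.
Qed.

Lemma trace_qm_kernel : (1 < m)%N -> exists2 x : L, x != 0 & trace_qm q m x = 0.
Proof.
move=> m_gt1; have : ~~ injectiveb (@trace_qm L q m).
  move: card_subFq; apply: contraTN => /injectiveP trace_inj; rewrite -ltnNge.
  have image_sub : [set trace_qm q m x | x : L] \subset Fq.
    by apply/subsetP => _ /imsetP[x _ ->]; exact: trace_qm_subFq.
  apply: leq_trans (subset_leq_card image_sub).
  by rewrite card_imset // cardL -{1}(expn1 q) ltn_exp2l.
case/injectivePn => a [b a_neq_b trace_ab]; exists (a - b).
  by rewrite subr_eq0.
by rewrite trace_qmB trace_ab subrr.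
Qed.

Section PermutationCriterion.
Variables (j : nat) (h : {poly L}).
Hypothesis m_gt1 : (1 < m)%N.
Hypothesis j_gt0 : (0 < j)%N.
Hypothesis j_coprime : coprime j #|L|.-1.
Hypothesis h_Fq : h \is a polyOver Fq.

Local Notation mu := (mu_j q m j).
Local Notation f := (fun x => x * h.[mu x]).
Local Notation g := (fun y => y * h.[y] ^+ j).

Lemma mu_j_subFq x : mu x \in Fq.
Proof. by rewrite mu_jE trace_qm_subFq. Qed.

Lemma mu_j_onto a : a \in Fq -> exists x, mu x = a.
Proof.
move=> Fa; have [r rK] := exprn_coprime_inv j_gt0 j_coprime.
by have [y <-] := trace_qm_onto Fa; exists (y ^+ r); rewrite mu_jE rK.
Qed.

Lemma mu_j_semiconj x : mu (f x) = g (mu x).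
Proof.
have Fh : h.[mu x] ^+ j \in Fq by rewrite rpredX ?rpred_horner ?mu_j_subFq.
by rewrite [LHS]mu_jE exprMn mulrC trace_qmZ // -mu_jE mulrC.
Qed.

Lemma horner0_neq0_of_inj : injective f -> h.[0] != 0.
Proof.
move=> f_inj; apply/eqP => h0.
have [x x_neq0 trace_x] := trace_qm_kernel m_gt1.
have [r rK] := exprn_coprime_inv j_gt0 j_coprime.
have : f (x ^+ r) = f 0 by rewrite /= mu_jE rK trace_x h0 mulr0 mul0r.
move/f_inj => xr0; move: x_neq0.
by rewrite -(rK x) xr0 expr0n gtn_eqF ?eqxx.
Qed.

Lemma permutes_subFq_of_inj : injective f -> permutes_on Fq g.
Proof.
move=> f_inj; exact: semiconj_permutes_on f_inj mu_j_subFq mu_j_onto mu_j_semiconj.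
Qed.

Lemma inj_of_permutes_subFq : h.[0] != 0 -> permutes_on Fq g -> injective f.
Proof.
move=> h0_neq0 [_ g_inj] a b /= fab.
have mu_ab : mu a = mu b.
  by apply: g_inj; rewrite ?mu_j_subFq // -!mu_j_semiconj /= fab.
rewrite -mu_ab in fab; apply: (mulIf _ fab); apply: contra h0_neq0 => /eqP h_mu0.
have g_mu_a : g (mu a) = g 0 by rewrite /= h_mu0 expr0n (gtn_eqF j_gt0) mulr0 mul0r.
have mu_a0 : mu a = 0 by apply: g_inj g_mu_a; rewrite ?mu_j_subFq ?rpred0.
by move: h_mu0; rewrite mu_a0 => ->.
Qed.

End PermutationCriterion.
End Frobenius.

Theorem theorem3p2 (L : finFieldType) (q m j : nat)
  (hq : exists p k : nat, [/\ prime p, (0 < k)%N & q = (p ^ k)%N])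
  (hL : #|L| = (q ^ m)%N)
  (hm : (1 < m)%N)
  (hj1 : (1 <= j)%N) (hj2 : (j <= q ^ m - 1)%N)
  (hjc : coprime j (q ^ m - 1))
  (h : {poly L}) (hh : h \is a polyOver (@subFq L q)) :
  permutes_on [pred _ | true] (fun x : L => x * h.[mu_j q m j x])
  <-> (h.[0] != 0 /\ permutes_on (@subFq L q) (fun x : L => x * h.[x] ^+ j)).
Proof.
have [p [k [p_prime k_gt0 qE]]] := hq.
have p_char : p \in [pchar L].
  by apply: (card_finPcharP (n := (k * m)%N)); rewrite // hL qE expnM.
have q_pchar : [pchar L].-nat q by rewrite qE pnatX pnatE // p_char.
have q_gt1 : (1 < q)%N by rewrite qE -{1}(expn0 p) ltn_exp2l ?prime_gt1.
have m_gt0 : (0 < m)%N by apply: ltnW.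
have j_coprime : coprime j #|L|.-1 by rewrite hL -subn1.
split=> [/permutes_on_predT f_inj | [h0_neq0 g_perm]].
  by split; [apply: horner0_neq0_of_inj f_inj | apply: permutes_subFq_of_inj f_inj].
by apply/permutes_on_predT; apply: inj_of_permutes_subFq h0_neq0 g_perm.
Qed.
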